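(* Let $H=(S_1,\dots,S_\ell)$ be a partial route. For every $H'\subseteq H$ and every $\bar x\in\mathcal{X}$, $$\bar x(H')-|V_+(H')|+1\ \ge\ W_{OF}(\bar x;H)-1.$$
   Context: $G=(V,E)$ complete undirected graph, $V=\{0\}\cup V_+$ ($V_+$ customers); capacity $C>0$; scenario demands $d^\xi\in\mathbb{Q}^{V_+}_{\ge0}$ and probabilities $p_\xi\ge0$ summing to $1$, $\bar d=\sum_\xi p_\xi d^\xi$. $f(S)=\sum_{i\in S}f(i)$; $E(S)$: edges with both ends in $S$; $E(S,T)$: edges with one end in $S$ and the other in $T$ ($S,T$ disjoint); $\delta(S)$: edges with exactly one end in $S$. $\mathcal{X}$ is one of $\mathcal{X}_{\mathrm{sub}}=\{x\in[0,2]^E: x(\delta(v))=2\ \forall v\in V_+,\ x(E(S))\le|S|-1\ \forall\emptyset\ne S\subseteq V_+\}$ or $\mathcal{X}_{\mathrm{cvrp}}=\mathcal{X}_{\mathrm{sub}}\cap\{x:x(\delta(0))=2k,\ x(E(S))\le|S|-\lceil\bar d(S)/C\rceil\}$. A partial route $H=(S_1,\dots,S_\ell)$ is a tuple of pairwise disjoint nonempty subsets of $V_+$ with no index $i$ such that both $S_i$ and $S_{i+1}$ have more than one element; $V_+(H)=\bigcup_iS_i$; $H'\subseteq H$ means $H'=(S_i,\dots,S_j)$ for some $1\le i\le j\le\ell$. $x(H)=\sum_{i\in[\ell]}x(E(S_i))+\sum_{i\in[\ell-1]}x(E(S_i,S_{i+1}))$, and $W_{OF}(x;H)=1+(x(H)-|V_+(H)|+1)+\sum_{i\in\{2,\ell-1\}\cap[\ell]}(x(E(S_i))-|S_i|+1)$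 (the index set $\{2,\ell-1\}\cap[\ell]$ is a set, so a repeated index is counted once). *)

From mathcomp Require Import all_boot all_order all_algebra.
Set Implicit Arguments. Unset Strict Implicit. Unset Printing Implicit Defensive.
Import Order.TTheory GRing.Theory Num.Theory.
Local Open Scope ring_scope.

(* Edges of the complete undirected graph: 2-element subsets of V.
   A vector x in R^E is a function {set V} -> R (only values on edges matter). *)

Definition is_edge (V : finType) (e : {set V}) : bool := #|e| == 2%N.

Definition Vplus (V : finType) (o : V) : {set V} := [set v | v != o].

Definition xE (R : numDomainType) (V : finType) (x : {set V} -> R) (S : {set V}) : R :=
  \sum_(e : {set V} | is_edge e && (e \subset S)) x e.

Definition xES (R : numDomainType) (V : finType) (x : {set V} -> R) (S T : {set V}) : R :=
  \sum_(e : {set V} | [&& is_edge e, #|e :&: S| == 1%N & #|e :&: T| == 1%N]) x e.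

Definition xdelta (R : numDomainType) (V : finType) (x : {set V} -> R) (S : {set V}) : R :=
  \sum_(e : {set V} | is_edge e && (#|e :&: S| == 1%N)) x e.

Definition dbar (R : numFieldType) (V Xi : finType) (p : Xi -> R) (d : Xi -> V -> rat) (v : V) : R :=
  \sum_(xi : Xi) p xi * ratr (d xi v).

Definition Xsub (R : numDomainType) (V : finType) (o : V) (x : {set V} -> R) : Prop :=
  [/\ (forall e : {set V}, is_edge e -> 0 <= x e <= 2),
      (forall v : V, v != o -> xdelta x [set v] = 2) &
      (forall S : {set V}, S != set0 -> S \subset Vplus o -> xE x S <= #|S|%:R - 1)].

Definition Xcvrp (R : archiRealFieldType) (V : finType) (o : V) (k : nat) (C : R)
    (db : V -> R) (x : {set V} -> R) : Prop :=
  [/\ Xsub o x,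
      xdelta x [set o] = 2 * k%:R &
      (forall S : {set V}, S != set0 -> S \subset Vplus o ->
         xE x S <= #|S|%:R - (Num.ceil ((\sum_(i in S) db i) / C))%:~R)].

(* partial route H = (S_1,...,S_l) as a sequence (0-based: S_{i+1} = nth set0 H i) *)
Definition partial_route (V : finType) (o : V) (H : seq {set V}) : Prop :=
  [/\ (forall i, (i < size H)%N -> nth set0 H i != set0 /\ nth set0 H i \subset Vplus o),
      (forall i j, (i < size H)%N -> (j < size H)%N -> i != j ->
         [disjoint nth set0 H i & nth set0 H j]) &
      (forall i, (i.+1 < size H)%N ->
         ~~ ((1 < #|nth set0 H i|)%N && (1 < #|nth set0 H i.+1|)%N))].

Definition VpH (V : finType) (H : seq {set V}) : {set V} := \bigcup_(S <- H) S.

Definition xH (R : numDomainType) (V : finType) (x : {set V} -> R) (H : seq {set V}) : R :=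
  \sum_(i < size H) xE x (nth set0 H i)
  + \sum_(i < (size H).-1) xES x (nth set0 H i) (nth set0 H i.+1).

(* W_OF(x;H); the extra sum ranges over the 1-based index set {2, l-1} ∩ [l] *)
Definition WOF (R : numDomainType) (V : finType) (x : {set V} -> R) (H : seq {set V}) : R :=
  1 + (xH x H - #|VpH H|%:R + 1)
  + \sum_(1 <= i < (size H).+1 | (i == 2%N) || (i == (size H).-1))
      (xE x (nth set0 H i.-1) - #|nth set0 H i.-1|%:R + 1).

(* H' = (S_i,...,S_j), 0-based indices i <= j < l *)
Definition subroute (V : finType) (H : seq {set V}) (i j : nat) : seq {set V} :=
  take (j - i).+1 (drop i H).

From mathcomp Require Import all_boot all_order all_algebra.
From mathcomp Require Import ring lra zify.
Set Implicit Arguments. Unset Strict Implicit. Unset Printing Implicit Defensive.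
Import Order.TTheory GRing.Theory Num.Theory.
Local Open Scope ring_scope.

(* Put ex(G) = x(G) - |V_+(G)| + 1 for a sequence of blocks G.  Then
   W_OF(x;H) - 1 = ex(H) + ex((S_2)) + ex((S_(l-1))), the corrections being
   present only when the index exists and counted once when 2 = l-1, and the
   claim reads ex(H) + corrections <= ex(H').  The subtour constraint on
   V_+(G) gives ex(G) <= 0 for every nonempty partial route, in particular
   ex((S)) <= 0 for each block.  Gluing at a shared block,
   ex(G1 ++ A :: G2) = ex(G1 ++ [A]) + ex(A :: G2) - ex((A)), splits ex(H)
   into ex(H') plus one term for each side of H'.  On the right side
   (Z, Q, ...) it suffices that ex(Z, Q, ...) + ex(penultimate block) <= ex((Z)):
   if Q = {v} is a singleton, the degree equation x(delta(v)) = 2 pays for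
   both edges at v; otherwise Z and the block after Q are singletons, as two
   consecutive blocks are never both large, and ex <= 0 on the two-block
   routes around Q suffices.  The left side is the mirror image.  When l = 3
   and H' = (S_2) both corrections are the same term; then ex(H) <= 0 is
   enough. *)

Lemma disjoint_mem_and (T : finType) (A B : {set T}) (z : T) :
  [disjoint A & B] -> ~~ ((z \in A) && (z \in B)).
Proof. by move=> /pred0P/(_ z) /= ->. Qed.

(* On an edge [set u; w], each identity or inequality between edge sums below
   reduces to a boolean tautology in the memberships of u and w. *)
Section EdgeSums.
Variables (R : numDomainType) (V : finType) (x : {set V} -> R).

Lemma edgeP (e : {set V}) : is_edge e -> exists u w, u != w /\ e = [set u; w].
Proof. exact/cards2P. Qed.

Lemma sub_edge (u w : V) (S : {set V}) : ([set u; w] \subset S) = (u \in S) && (w \in S).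
Proof. by rewrite subUset !sub1set. Qed.

Lemma card_set1I (u : V) (S : {set V}) : #|[set u] :&: S| = (u \in S).
Proof.
have [uS | uNS] := boolP (u \in S); first by rewrite (setIidPl _) ?sub1set ?cards1.
by rewrite (disjoint_setI0 _) ?cards0 ?disjoints1.
Qed.

Lemma card1_edgeI (u w : V) (S : {set V}) : u != w ->
  (#|[set u; w] :&: S| == 1%N) = ((u \in S) != (w \in S)).
Proof.
move=> uw; rewrite setIUl cardsU !card_set1I setIACA setIid.
rewrite (disjoint_setI0 (_ : [disjoint [set u] & [set w]])) ?disjoints1 ?inE //.
by rewrite set0I cards0 subn0; case: (u \in S); case: (w \in S).
Qed.

Lemma edge_sum_split (P P1 P2 : pred {set V}) :
  (forall e, is_edge e -> P e = P1 e || P2 e) ->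
  (forall e, is_edge e -> ~~ (P1 e && P2 e)) ->
  \sum_(e | is_edge e && P e) x e =
    \sum_(e | is_edge e && P1 e) x e + \sum_(e | is_edge e && P2 e) x e.
Proof.
move=> PE P12; rewrite (bigID P1) /=; congr (_ + _); apply: eq_bigl => e;
  case E: (is_edge e) => //=; rewrite PE //; move: (P12 e E);
  by case: (P1 e); case: (P2 e).
Qed.

Lemma xESC (S T : {set V}) : xES x S T = xES x T S.
Proof. by apply: eq_bigl => e; rewrite [X in _ && X]andbC. Qed.

Lemma xE_set1 (v : V) : xE x [set v] = 0.
Proof.
apply: big1 => e /andP[/edgeP[a [b [ab ->]]]].
by rewrite sub_edge !inE => /andP[/eqP ea /eqP eb]; rewrite ea eb eqxx in ab.
Qed.

Lemma xE_setU (S T : {set V}) : [disjoint S & T] ->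
  xE x (S :|: T) = xE x S + xE x T + xES x S T.
Proof.
move=> dST; rewrite /xE /xES -addrA.
have dis z := disjoint_mem_and z dST.
rewrite (@edge_sum_split _ (fun e => e \subset S)
   (fun e => (e \subset T) || ((#|e :&: S| == 1%N) && (#|e :&: T| == 1%N))));
  first (congr (_ + _); apply: edge_sum_split).
all: move=> e /edgeP[u [w [uw ->]]]; rewrite !sub_edge ?card1_edgeI // ?inE;
  by move: (dis u) (dis w); case: (u \in S); case: (w \in S); case: (u \in T); case: (w \in T).
Qed.

Hypothesis x_ge0 : forall e, is_edge e -> 0 <= x e.

Lemma edge_sum_mono (P Q : pred {set V}) :
  (forall e, is_edge e -> P e -> Q e) ->
  \sum_(e | is_edge e && P e) x e <= \sum_(e | is_edge e && Q e) x e.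
Proof.
move=> PQ; rewrite [leRHS](bigID P) /=.
have -> : \sum_(e | is_edge e && Q e && P e) x e = \sum_(e | is_edge e && P e) x e.
  by apply: eq_bigl => e; case E: (is_edge e) => //=; case F: (P e); rewrite ?andbF ?PQ.
by rewrite lerDl sumr_ge0 // => e /andP[/andP[/x_ge0]].
Qed.

Lemma xES_subr (S T T' : {set V}) : [disjoint S & T'] -> T \subset T' ->
  xES x S T <= xES x S T'.
Proof.
move=> dST' /subsetP TT'; apply: edge_sum_mono => e /edgeP[u [w [uw ->]]].
rewrite !card1_edgeI //.
have dis z := disjoint_mem_and z dST'.
have sub z : (z \in T) ==> (z \in T') by apply/implyP => /TT'.
move: (dis u) (dis w) (sub u) (sub w).
by case: (u \in S); case: (w \in S); case: (u \in T); case: (w \in T);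
  case: (u \in T'); case: (w \in T').
Qed.

Lemma xES_setUr (S T1 T2 : {set V}) : [disjoint S & T1 :|: T2] -> [disjoint T1 & T2] ->
  xES x S (T1 :|: T2) = xES x S T1 + xES x S T2.
Proof.
move=> dS d12.
apply: edge_sum_split => e /edgeP[u [w [uw ->]]]; rewrite !card1_edgeI // ?inE;
  move: (disjoint_mem_and u dS) (disjoint_mem_and w dS);
  move: (disjoint_mem_and u d12) (disjoint_mem_and w d12); rewrite !inE;
  by case: (u \in S); case: (w \in S); case: (u \in T1); case: (w \in T1);
     case: (u \in T2); case: (w \in T2).
Qed.

Lemma xES_le_xdelta (S T : {set V}) : xES x S T <= xdelta x S.
Proof. by apply: edge_sum_mono => e _ /andP[]. Qed.

End EdgeSums.

Definition excess (R : numDomainType) (V : finType) (x : {set V} -> R) (G : seq {set V}) : R :=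
  xH x G - #|VpH G|%:R + 1.

Notation blocks_disjoint := (pairwise (fun S T : {set _} => [disjoint S & T])).

Section RouteAlgebra.
Variables (R : numDomainType) (V : finType) (x : {set V} -> R).
Implicit Types (S T A : {set V}) (G : seq {set V}).

Lemma xH1 S : xH x [:: S] = xE x S.
Proof. by rewrite /xH /= big_ord1 big_ord0 addr0. Qed.

Lemma xH_cons2 S T G : xH x [:: S, T & G] = xE x S + xES x S T + xH x (T :: G).
Proof.
rewrite /xH /= big_ord_recl [X in _ + X = _]big_ord_recl /=.
under eq_bigr do rewrite add0n.
under [X in _ + (_ + X) = _]eq_bigr do rewrite add0n.
by rewrite addrACA.
Qed.

Lemma xH_cat_cons (G1 G2 : seq {set V}) A :
  xH x (G1 ++ A :: G2) = xH x (rcons G1 A) + xH x (A :: G2) - xE x A.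
Proof.
elim: G1 => [|S [|T G1] IH] /=; first by rewrite xH1; ring.
  by rewrite !xH_cons2 xH1; ring.
by rewrite !xH_cons2 IH /=; ring.
Qed.

Lemma xH_rev G : xH x (rev G) = xH x G.
Proof.
elim: G => [|S [|T G] IH] //.
rewrite rev_cons -cats1 rev_cons cat_rcons xH_cat_cons -rev_cons IH.
by rewrite !xH_cons2 xH1 xESC; ring.
Qed.

Lemma VpH_rev G : VpH (rev G) = VpH G.
Proof. exact: big_rev. Qed.

Lemma disjoint_VpH S G : all (fun T => [disjoint S & T]) G -> [disjoint S & VpH G].
Proof.
elim: G => [|T G IH] /=; first by rewrite /VpH big_nil -setI_eq0 setI0.
case/andP=> dST /IH; rewrite /VpH big_cons; move: dST.
by rewrite -!setI_eq0 setIUr setU_eq0 => -> ->.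
Qed.

Lemma card_VpH G : blocks_disjoint G -> #|VpH G| = (\sum_(S <- G) #|S|)%N.
Proof.
elim: G => [|S G IH] /=; first by rewrite /VpH !big_nil cards0.
case/andP=> /disjoint_VpH dS /IH; rewrite /VpH !big_cons => <-.
by rewrite cardsU (disjoint_setI0 dS) cards0 subn0.
Qed.

Lemma excess1 S : excess x [:: S] = xE x S - #|S|%:R + 1.
Proof. by rewrite /excess xH1 /VpH big_seq1. Qed.

Lemma excess_rev G : excess x (rev G) = excess x G.
Proof. by rewrite /excess xH_rev VpH_rev. Qed.

Lemma excess_cat_cons (G1 G2 : seq {set V}) A : blocks_disjoint (G1 ++ A :: G2) ->
  excess x (G1 ++ A :: G2) = excess x (rcons G1 A) + excess x (A :: G2) - excess x [:: A].
Proof.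
move=> dG.
have d1 : blocks_disjoint (rcons G1 A) by move: dG; rewrite -cat_rcons pairwise_cat => /and3P[].
have d2 := subseq_pairwise (suffix_subseq G1 (A :: G2)) dG.
rewrite excess1 /excess !card_VpH // xH_cat_cons big_cat big_rcons !big_cons /=.
rewrite !natrD; ring.
Qed.

Lemma excess_take_drop k G : blocks_disjoint G -> (k < size G)%N ->
  excess x G = excess x (take k.+1 G) + excess x (drop k G) - excess x [:: nth set0 G k].
Proof.
move=> dG kG; rewrite (take_nth set0 kG) -[X in excess x X = _](cat_take_drop k G).
by rewrite (drop_nth set0 kG) excess_cat_cons // -drop_nth ?cat_take_drop.
Qed.

Lemma excess_set1 (v : V) : excess x [:: [set v]] = 0.
Proof. by rewrite excess1 xE_set1 cards1 sub0r addNr. Qed.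

Hypothesis x_ge0 : forall e, is_edge e -> 0 <= x e.

Lemma xH_le_xE G : blocks_disjoint G -> xH x G <= xE x (VpH G).
Proof.
elim: G => [|S [|T G] IH].
- by rewrite /xH !big_ord0 addr0 sumr_ge0 // => e /andP[/x_ge0].
- by move=> _; rewrite xH1 /VpH big_seq1.
rewrite pairwise_cons => /andP[/disjoint_VpH dS dG].
rewrite xH_cons2 /VpH big_cons -/(VpH (T :: G)) xE_setU //.
rewrite -!addrA lerD2l addrC lerD ?IH //.
by apply: xES_subr; rewrite // /VpH big_cons subsetUl.
Qed.
End RouteAlgebra.

Lemma pairwise_rev (T : Type) (r : rel T) (s : seq T) :
  symmetric r -> pairwise r (rev s) = pairwise r s.
Proof.
move=> r_sym; elim: s => //= a s IH.
by rewrite rev_cons pairwise_rcons all_rev IH (eq_all (r_sym^~ a)) andbC.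
Qed.

Definition adjacent_blocks (V : finType) (S T : {set V}) : bool :=
  ~~ ((1 < #|S|)%N && (1 < #|T|)%N).

Definition partial_routeb (V : finType) (o : V) (G : seq {set V}) : bool :=
  [&& all (fun S => (S != set0) && (S \subset Vplus o)) G, blocks_disjoint G
    & sorted (@adjacent_blocks V) G].

Section PartialRoutes.
Variables (V : finType) (o : V).
Implicit Types (S T : {set V}) (G : seq {set V}).

Lemma partial_routeP G : reflect (partial_route o G) (partial_routeb o G).
Proof.
apply: (iffP and3P) => [[/(all_nthP set0) blk /(pairwiseP set0) dis /(sortedP set0) adj] |
                        [blk dis adj]]; split.
- by move=> k /blk/andP.
- move=> a b aG bG; case: ltngtP => // [ab | ba] _; first exact: dis.
  by rewrite disjoint_sym; apply: dis.
- by move=> k /adj.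
- by apply/(all_nthP set0) => k /blk[-> ->].
- by apply/(pairwiseP set0) => a b aG bG ab; apply: dis => //; rewrite neq_ltn ab.
- by apply/(sortedP set0) => k /adj.
Qed.

Lemma partial_routeb_cat (G1 G2 : seq {set V}) :
  partial_routeb o (G1 ++ G2) -> partial_routeb o G1 /\ partial_routeb o G2.
Proof.
case/and3P; rewrite all_cat pairwise_cat => /andP[a1 a2] /and3P[_ p1 p2] /cat_sorted2[s1 s2].
by split; apply/and3P.
Qed.

Lemma partial_routeb_take n G : partial_routeb o G -> partial_routeb o (take n G).
Proof. by rewrite -{1}(cat_take_drop n G) => /partial_routeb_cat[]. Qed.

Lemma partial_routeb_drop n G : partial_routeb o G -> partial_routeb o (drop n G).
Proof. by rewrite -{1}(cat_take_drop n G) => /partial_routeb_cat[]. Qed.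

Lemma partial_routeb_rev G : partial_routeb o G -> partial_routeb o (rev G).
Proof.
case/and3P=> a p s; apply/and3P; split; rewrite ?all_rev ?pairwise_rev //.
- by move=> S T; rewrite disjoint_sym.
rewrite rev_sorted; case: G {a p} s => //= S G.
by rewrite (@eq_path _ _ (@adjacent_blocks V)) // => T U; rewrite /adjacent_blocks andbC.
Qed.

Lemma partial_routeb_disjoint G : partial_routeb o G -> blocks_disjoint G.
Proof. by case/and3P. Qed.

Lemma partial_routeb_block G S :
  partial_routeb o G -> S \in G -> (S != set0) && (S \subset Vplus o).
Proof. by case/and3P=> /allP blk _ _ /blk. Qed.

Lemma partial_routeb_set1 G S :
  partial_routeb o G -> S \in G -> (#|S| <= 1)%N -> exists v, S = [set v].
Proof.
move=> pG /(partial_routeb_block pG)/andP[S0 _] S1.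
by apply/cards1P; rewrite eqn_leq S1 card_gt0.
Qed.

Lemma partial_routeb_adjacent S T G : partial_routeb o [:: S, T & G] -> adjacent_blocks S T.
Proof. by case/and3P=> _ _ /andP[]. Qed.

Lemma VpH_partial_routeb G : partial_routeb o G -> G != [::] ->
  (VpH G != set0) && (VpH G \subset Vplus o).
Proof.
case: G => [|S G] // pG _; apply/andP; split.
  have /andP[/set0Pn[v vS] _] := partial_routeb_block pG (mem_head S G).
  by apply/set0Pn; exists v; rewrite /VpH big_cons inE vS.
rewrite /VpH big_seq; apply: (big_ind (fun U : {set V} => U \subset Vplus o)).
- exact: sub0set.
- by move=> A B AV BV; rewrite subUset AV.
- by move=> T /(partial_routeb_block pG)/andP[].
Qed.
End PartialRoutes.

Section SubtourPolytope.
Variables (R : realDomainType) (V : finType) (o : V) (x : {set V} -> R).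
Hypothesis xs : Xsub o x.
Implicit Types (S T A B Z : {set V}) (G : seq {set V}).

Lemma Xsub_ge0 e : is_edge e -> 0 <= x e.
Proof. by case: xs => x02 _ _ /x02 /andP[]. Qed.

Lemma xE_subtour S : S != set0 -> S \subset Vplus o -> xE x S <= #|S|%:R - 1.
Proof. by case: xs => _ _; apply. Qed.

Lemma xES_set1_le2 v A B : v != o -> [disjoint A & B] -> v \notin A -> v \notin B ->
  xES x [set v] A + xES x [set v] B <= 2.
Proof.
move=> vo dAB vA vB; case: xs => _ deg _.
rewrite -xES_setUr ?disjoints1 ?inE ?negb_or ?vA ?vB // -(deg v vo).
exact: xES_le_xdelta Xsub_ge0 _ _.
Qed.

Lemma excess_le0 G : partial_routeb o G -> G != [::] -> excess x G <= 0.
Proof.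
move=> pG G0; have /andP[V0 VV] := VpH_partial_routeb pG G0.
have := xH_le_xE Xsub_ge0 (partial_routeb_disjoint pG); have := xE_subtour V0 VV.
rewrite /excess; lra.
Qed.

Lemma excess1_le0 G S : partial_routeb o G -> S \in G -> excess x [:: S] <= 0.
Proof.
by move=> pG /(partial_routeb_block pG)/andP[S0 SV]; rewrite excess1; have := xE_subtour S0 SV; lra.
Qed.

Lemma excess_set1_mid A v B : partial_routeb o [:: A; [set v]; B] ->
  excess x [:: A; [set v]; B] <= excess x [:: A] + excess x [:: B].
Proof.
move=> pG; have dG := partial_routeb_disjoint pG.
move: (dG) => /= /and3P[/and3P[dAv dAB _] /andP[dvB _] _].
have vo : v != o.
  have vG : [set v] \in [:: A; [set v]; B] by rewrite !inE eqxx orbT.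
  have /andP[_ /subsetP vV] := partial_routeb_block pG vG.
  by have := vV v (set11 v); rewrite inE.
have vA : v \notin A by rewrite -disjoints1 disjoint_sym.
have vB : v \notin B by rewrite -disjoints1.
have := xES_set1_le2 vo dAB vA vB.
rewrite !excess1 /excess card_VpH // !xH_cons2 xH1 xE_set1 (xESC x A).
rewrite !big_cons big_nil cards1 !natrD.
lra.
Qed.

(* [nth set0 (rev G) 1] is the penultimate block of G. *)
Lemma excess_cons_le Z Rt : partial_routeb o (Z :: Rt) -> Rt != [::] ->
  excess x (Z :: Rt) + excess x [:: nth set0 (rev (Z :: Rt)) 1] <= excess x [:: Z].
Proof.
case: Rt => [//|Q Rt] pG _; have dG := partial_routeb_disjoint pG.
have pen_le0 : excess x [:: nth set0 (rev (Z :: Q :: Rt)) 1] <= 0.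
  by apply: (excess1_le0 pG); rewrite -mem_rev mem_nth // size_rev.
case: Rt => [|W S] in pG dG pen_le0 *.
  by rewrite /rev /=; have := excess_le0 pG isT; lra.
have [Q1 | Q2] := leqP #|Q| 1.
  have QG : Q \in [:: Z, Q, W & S] by rewrite !inE eqxx orbT.
  have [v eQ] := partial_routeb_set1 pG QG Q1; subst Q.
  rewrite (excess_take_drop x (k:=2) dG) //=.
  have p3 := partial_routeb_take 3 pG; rewrite /= take0 in p3.
  have := excess_set1_mid p3; have := excess_le0 (partial_routeb_drop 2 pG) isT.
  rewrite /= take0; lra.
have [z eZ] : exists z, Z = [set z].
  apply: (partial_routeb_set1 pG (mem_head _ _)).
  by move: (partial_routeb_adjacent pG); rewrite /adjacent_blocks Q2 andbT -leqNgt.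
have [w eW] : exists w, W = [set w].
  have WG : W \in [:: Z, Q, W & S] by rewrite !inE eqxx !orbT.
  apply: (partial_routeb_set1 pG WG).
  move: (partial_routeb_adjacent (partial_routeb_drop 1 pG)).
  by rewrite /adjacent_blocks Q2 -leqNgt.
subst Z W; rewrite (excess_take_drop x (k:=1) dG) //= excess_set1.
have := excess_le0 (partial_routeb_take 2 pG) isT; rewrite /=.
case: S => [|W2 S] in pG dG pen_le0 *.
  by have := excess_le0 (partial_routeb_drop 1 pG) isT; rewrite /rev /=; lra.
have p1 := partial_routeb_drop 1 pG; rewrite /= in p1.
rewrite (excess_take_drop x (k:=2) (partial_routeb_disjoint p1)) //=.
have p3 := partial_routeb_take 3 p1; rewrite /= take0 in p3.
have := excess_set1_mid p3; have := excess_le0 (partial_routeb_drop 2 p1) isT.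
rewrite /= take0; lra.
Qed.

Lemma excess_rcons_le L A : partial_routeb o (rcons L A) -> L != [::] ->
  excess x (rcons L A) + excess x [:: nth set0 (rcons L A) 1] <= excess x [:: A].
Proof.
move=> pG L0; have := @excess_cons_le A (rev L).
rewrite -rev_rcons revK excess_rev; apply; first exact: partial_routeb_rev.
by rewrite -size_eq0 size_rev size_eq0.
Qed.

Lemma excess_take_le k G : partial_routeb o G -> (k < size G)%N ->
  excess x (take k.+1 G) + (if (0 < k)%N then excess x [:: nth set0 G 1] else 0)
    <= excess x [:: nth set0 G k].
Proof.
move=> pG kG; case: k => [|k] in kG *.
  by rewrite (take_nth set0 kG) take0 /= addr0.
have := @excess_rcons_le (take k.+1 G) (nth set0 G k.+1).
rewrite -take_nth // nth_take // => -> //; first exact: partial_routeb_take.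
by rewrite -size_eq0 size_take kG.
Qed.

Lemma excess_drop_le k G : partial_routeb o G -> (k < size G)%N ->
  excess x (drop k G) + (if (k.+1 < size G)%N then excess x [:: nth set0 G (size G).-2] else 0)
    <= excess x [:: nth set0 G k].
Proof.
move=> pG kG; case: ltnP => [k1 | kl].
  have := @excess_cons_le (nth set0 G k) (drop k.+1 G).
  rewrite -drop_nth // nth_rev ?size_drop ?nth_drop; last by lia.
  have -> : (k + (size G - k - 2))%N = (size G).-2 by lia.
  apply; first exact: partial_routeb_drop.
  by rewrite -size_eq0 size_drop subn_eq0 -ltnNge.
by rewrite (drop_nth set0 kG) drop_oversize // addr0.
Qed.

Lemma excess_subroute_le H i j : partial_routeb o H -> (i <= j < size H)%N ->
  excess x H + (if (0 < i)%N then excess x [:: nth set0 H 1] else 0)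
    + (if (j.+1 < size H)%N then excess x [:: nth set0 H (size H).-2] else 0)
    <= excess x (subroute H i j).
Proof.
move=> pH /andP[ij jH]; have dH := partial_routeb_disjoint pH.
have iH : (i < size H)%N by lia.
rewrite (excess_take_drop x dH iH).
have dD := partial_routeb_disjoint (partial_routeb_drop i pH).
rewrite (excess_take_drop x (k:=j - i) dD); last by rewrite size_drop; lia.
rewrite drop_drop nth_drop subnK // addnC subnK //.
have := excess_take_le pH iH; have := excess_drop_le pH jH; rewrite /subroute; lra.
Qed.
End SubtourPolytope.

Lemma subroute_diag (V : finType) (H : seq {set V}) i : (i < size H)%N ->
  subroute H i i = [:: nth set0 H i].
Proof. by move=> iH; rewrite /subroute subnn (drop_nth set0 iH) /= take0. Qed.

Lemma sum_le_sub_nonpos (R : numDomainType) (I : eqType) (r s : seq I) (P : pred I) (F : I -> R) :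
  uniq r -> uniq s -> {subset s <= [pred i in r | P i]} ->
  (forall i, i \in r -> P i -> F i <= 0) ->
  \sum_(i <- r | P i) F i <= \sum_(i <- s) F i.
Proof.
move=> ur us sr F0; rewrite (bigID (mem s)) /= -big_filter (perm_big s); last first.
  apply: uniq_perm; rewrite ?filter_uniq // => i; rewrite mem_filter.
  by apply/andP/idP => [[/andP[]] // | iS]; have /andP[ir ->] := sr i iS.
rewrite gerDl big_seq_cond; apply: sumr_le0 => i /andP[ir /andP[Pi _]]; exact: F0.
Qed.

Lemma WOFE (R : numDomainType) (V : finType) (x : {set V} -> R) (H : seq {set V}) :
  WOF x H = 1 + excess x H
    + \sum_(1 <= k < (size H).+1 | (k == 2%N) || (k == (size H).-1)) excess x [:: nth set0 H k.-1].
Proof. by congr (_ + _); apply: eq_bigr => k _; rewrite excess1. Qed.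

Lemma sum_WOF_le (R : numDomainType) (F : nat -> R) (l : nat) (b1 b2 : bool) :
  (forall k, (0 < k <= l)%N -> F k <= 0) -> (b1 || b2 -> 1 < l)%N -> (b1 && b2 ==> (l != 3))%N ->
  \sum_(1 <= k < l.+1 | (k == 2%N) || (k == l.-1)) F k
    <= (if b1 then F 2%N else 0) + (if b2 then F l.-1 else 0).
Proof.
move=> F0 l2 l3.
have -> : (if b1 then F 2%N else 0) + (if b2 then F l.-1 else 0)
    = \sum_(k <- (if b1 then [:: 2%N] else [::]) ++ (if b2 then [:: l.-1] else [::])) F k.
  by rewrite big_cat; case: b1 b2 {l2 l3} => [] [] /=; rewrite ?big_nil ?big_seq1.
apply: sum_le_sub_nonpos => [||k|k]; rewrite ?iota_uniq //.
- by case: b1 b2 l2 l3 => [] [] //= l2 l3; rewrite !inE; lia.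
- by case: b1 b2 l2 l3 => [] [] //= l2 _; rewrite !inE mem_index_iota; lia.
- by rewrite mem_index_iota => kl _; apply: F0; lia.
Qed.

Theorem lemma9 (R : archiRealFieldType) (V : finType) (o : V) (Xi : finType)
    (p : Xi -> R) (d : Xi -> V -> rat) (C : R) (k : nat)
    (H : seq {set V}) (x : {set V} -> R) :
  0 < C ->
  (forall xi, 0 <= p xi) ->
  (forall xi v, v != o -> 0 <= d xi v) ->
  \sum_(xi : Xi) p xi = 1 ->
  partial_route o H ->
  (Xsub o x \/ Xcvrp o k C (dbar p d) x) ->
  forall i j : nat, (i <= j < size H)%N ->
    WOF x H - 1 <= xH x (subroute H i j) - #|VpH (subroute H i j)|%:R + 1.
Proof.
move=> _ _ _ _ /partial_routeP pH hX i j ijH.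
have xs : Xsub o x by case: hX => [|[]].
have F0 n : (0 < n <= size H)%N -> excess x [:: nth set0 H n.-1] <= 0.
  by case: n => //= n nH; apply: (excess1_le0 xs pH); exact: mem_nth.
rewrite -/(excess x (subroute H i j)) (WOFE x H).
case: (boolP [&& 0 < i, j.+1 < size H & size H == 3]%N) => [/and3P[i0 jH /eqP H3] | not3].
  (* H = (S_1, S_2, S_3) and H' = (S_2): both corrections are ex((S_2)). *)
  have [-> ->] : i = 1%N /\ j = 1%N by lia.
  have l1 : (1 < size H)%N by rewrite H3.
  have H0 : H != [::] by rewrite -size_eq0 H3.
  have := sum_WOF_le (b1 := true) (b2 := false) F0 (fun=> l1) isT.
  by have := excess_le0 xs pH H0; rewrite subroute_diag ?H3 //=; lra.
have l1 : ((0 < i) || (j.+1 < size H) -> 1 < size H)%N by lia.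
have l3 : ((0 < i) && (j.+1 < size H) ==> (size H != 3))%N by move: not3; lia.
have corr_le := sum_WOF_le F0 l1 l3.
rewrite addrAC [1 + _]addrC addrK; apply: le_trans (excess_subroute_le xs pH ijH).
by apply: le_trans (lerD (lexx _) corr_le) _; rewrite addrA.
Qed.
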